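(* Let $\{A_n\}_{n\geqslant 1}$ be i.i.d. nonnegative random variables with Laplace–Stieltjes transform $\alpha(s)=\mathbb{E}[e^{-sA_1}]$, and let $\{B_n\}_{n\geqslant 1}$ be i.i.d. exponentially distributed with rate $\mu>0$, independent of $\{A_n\}$. Let $W_1=0$ and $W_{n+1}=\max\{0,\,B_{n+1}-A_n-W_n\}$ for $n\geqslant 1$, and let $C=\inf\{k\geqslant 1: W_{1+k}=0\}$ be the length of a regeneration cycle. Then $$\mathbb{P}[C=n]=\begin{cases}1-\alpha(\mu), & n=1,\\[2pt] \left[1-\tfrac12\alpha(\mu)\right]\left[\tfrac12\alpha(\mu)\right]^{n-2}\alpha(\mu), & n\geqslant 2.\end{cases}$$ *)

From HB Require Import structures.
From mathcomp Require Import all_boot all_order all_algebra.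
From mathcomp Require Import all_classical all_reals all_analysis.
Set Implicit Arguments. Unset Strict Implicit. Unset Printing Implicit Defensive.
Import Order.TTheory GRing.Theory Num.Theory Num.Def.
Local Open Scope classical_set_scope.
Local Open Scope ring_scope.

Definition mutually_independent d (T : measurableType d) (R : realType)
  (P : probability T R) (I : eqType) (D : set I) (X : I -> {RV P >-> R}) :=
  forall (J : seq I) (S : I -> set R), uniq J ->
    (forall i, i \in J -> D i) ->
    (forall i, i \in J -> measurable (S i)) ->
    P (\bigcap_(i in [set` J]) (X i @^-1` S i)) =
    (\big[*%E/1%E]_(i <- J) P (X i @^-1` S i))%E.

Definition AB_family d (T : measurableType d) (R : realType) (P : probability T R)
  (A B : nat -> {RV P >-> R}) : nat + nat -> {RV P >-> R} :=
  fun i => match i with inl n => A n | inr n => B n end.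

Definition idx (i : nat + nat) : nat := match i with inl n => n | inr n => n end.

(* Laplace-Stieltjes transform  s |-> E[exp(-s X)]  (real-valued; finite for X >= 0, s >= 0) *)
Definition LST d (T : measurableType d) (R : realType) (P : probability T R)
  (X : T -> R) (s : R) : R :=
  fine ('E_P[fun w => expR (- s * X w)])%E.

(* w k = W_{k+1}: W_1 = 0, W_{k+2} = max(0, B_{k+2} - A_{k+1} - W_{k+1}) *)
Fixpoint Wshift (R : realType) (T : Type) (A B : nat -> T -> R) (x : T) (k : nat) : R :=
  match k with
  | 0 => 0
  | k'.+1 => maxr 0 (B k'.+2 x - A k'.+1 x - Wshift A B x k')
  end.

(* W_n for n >= 1 (W_0 is unused and set to 0) *)
Definition W (R : realType) (T : Type) (A B : nat -> T -> R) (x : T) (n : nat) : R :=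
  Wshift A B x n.-1.

Definition cycle_len_eq (R : realType) (T : Type) (A B : nat -> T -> R) (n : nat) : set T :=
  [set x | W A B x n.+1 = 0 /\ forall k, (1 <= k < n)%N -> W A B x k.+1 <> 0].

From HB Require Import structures.
From mathcomp Require Import all_boot all_order all_algebra.
From mathcomp Require Import all_classical all_reals all_analysis.
From mathcomp Require Import measurable_realfun.
From mathcomp Require Import ring lra zify.
Import Order.TTheory GRing.Theory Num.Theory Num.Def.
Local Open Scope classical_set_scope.
Local Open Scope ring_scope.
Set Implicit Arguments. Unset Strict Implicit. Unset Printing Implicit Defensive.

(* With [Wrun k] defined below, {C = 1} = {Wrun 0 = 0} and
   {C = k+2} = {Wrun k > 0} \ {Wrun (k+1) > 0}, so it suffices to show
   P (Wrun k > s) = alpha (alpha/2)^k e^{-mu s} for s >= 0, by induction on k.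
   Now Wrun (k+1) > s iff Wrun k > 0 and B_{k+3} > s + A_{k+2} + Wrun k; as B_{k+3}
   is exponential and independent of A_{k+2} and Wrun k, memorylessness gives
   P (Wrun (k+1) > s) = e^{-mu s} alpha E[e^{-mu Wrun k}; Wrun k > 0].  For Z with
   P (Z > s) = p e^{-mu s}, computing P (0 < Z <= B) for an independent exponential B
   by conditioning on Z or on B shows E[e^{-mu Z}; Z > 0] = p - p E[e^{-mu B}; B > 0];
   the case Z = B' (p = 1) gives E[e^{-mu B}; B > 0] = 1/2, so the expectation is p/2. *)

Section independence.
Context d (T : measurableType d) (R : realType) (P : probability T R).
Local Open Scope ereal_scope.

Lemma measurable_bool_set d' (U : measurableType d') (c : U -> bool) :
  measurable_fun setT c -> measurable [set w | c w].
Proof.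
move=> mc; have := mc measurableT [set true] I; rewrite setTI.
by congr measurable; apply/seteqP; split => w /=.
Qed.

Lemma integral_bool_indic (c : T -> bool) : measurable [set w | c w] ->
  \int[P]_w (if c w then 1 else 0)%:E = P [set w | c w].
Proof.
move=> mc; rewrite -[in RHS](setIT [set w | c w]) -integral_indic //.
apply: eq_integral => w _; rewrite indicE.
by have [h|h] := boolP (c w); [rewrite mem_set|rewrite memNset //= (negbTE h)].
Qed.

Lemma probability_setD_sub (A B : set T) : measurable A -> measurable B ->
  B `<=` A -> P (A `\` B) = P A - P B.
Proof.
move=> mA mB BA; rewrite measureD ?(setIidr BA) //.
exact: le_lt_trans (probability_le1 P mA) (ltey _).
Qed.

(* Dynkin's pi-lambda theorem, applied to the sets independent of E. *)
Lemma indep_event_g_sigma (E : set T) (G : set (set T)) :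
  measurable E -> setI_closed G -> G `<=` measurable ->
  (forall A, G A -> P (E `&` A) = P E * P A) ->
  forall A, <<s G >> A -> P (E `&` A) = P E * P A.
Proof.
move=> mE GI Gm h.
pose H := [set A | measurable A /\ P (E `&` A) = P E * P A].
suff : <<s G >> `<=` H by move=> sub A /sub[].
apply: lambda_system_subset => //; last by move=> A GA; split; [exact: Gm|exact: h].
have fE : P E \is a fin_num by rewrite fin_num_measure.
apply/dynkin_lambda_system; split.
- by split => //; rewrite setIT probability_setT mule1.
- move=> A [mA hA]; split; first exact: measurableC.
  have eD : P (E `\` A) = P E - P (E `&` A).
    by rewrite measureD // (le_lt_trans (probability_le1 P mE)) ?ltey.
  have fA : P A \is a fin_num by rewrite fin_num_measure.
  by rewrite probability_setC // -setDE eD hA muleBr ?mule1.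
- move=> F tF hF; have mF k : measurable (F k) by have [] := hF k.
  split; first exact: bigcupT_measurable.
  rewrite setI_bigcupr measure_bigcup //=; last 2 first.
  + by move=> k _; exact: measurableI.
  + by apply: trivIset_setIl; exact: tF.
  rewrite [in RHS]measure_bigcup //= (eq_eseriesr (fun k _ => (hF k).2)).
  by rewrite -(fineK fE) nneseriesZl.
Qed.

Definition independent (Y Z : T -> R) := forall S S' : set R,
  measurable S -> measurable S' ->
  P (Y @^-1` S `&` Z @^-1` S') = P (Y @^-1` S) * P (Z @^-1` S').

Lemma independentC Y Z : independent Y Z -> independent Z Y.
Proof. by move=> YZ S S' mS mS'; rewrite setIC YZ // muleC. Qed.

Section pair.
Variables (Y Z : T -> R) (mY : measurable_fun setT Y) (mZ : measurable_fun setT Z).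
Hypothesis YZ_indep : independent Y Z.

(* The law of (Y, Z) is the product of the marginal laws; then Fubini-Tonelli. *)
Lemma integral_indep_pair (g : R * R -> \bar R) :
  measurable_fun setT g -> (forall p, 0 <= g p) ->
  \int[P]_w g (Y w, Z w) = \int[P]_v \int[P]_w g (Y w, Z v).
Proof.
move=> mg g0.
pose Y' : {RV P >-> R} := HB.pack Y (isMeasurableFun.Build _ _ _ _ Y mY).
pose Z' : {RV P >-> R} := HB.pack Z (isMeasurableFun.Build _ _ _ _ Z mZ).
have mV : measurable_fun setT (fun w => (Y w, Z w)) by exact: measurable_fun_pair.
pose V : {RV P >-> (R * R)%type} :=
  HB.pack (fun w => (Y w, Z w)) (isMeasurableFun.Build _ _ _ _ _ mV).
have -> : \int[P]_w g (Y w, Z w) = \int[distribution P V]_p g p.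
  by rewrite ge0_integral_distribution.
rewrite (eq_measure_integral (distribution P Y' \x distribution P Z')); last first.
  by move=> S mS _; apply/esym; apply: product_measure_unique.
rewrite fubini_tonelli2 // ge0_integral_distribution //; last first.
- by move=> z; apply: integral_ge0 => y _; exact: g0.
- exact: measurable_fun_fubini_tonelli_G.
apply: eq_integral => v _ /=.
by rewrite /fubini_G ge0_integral_distribution //; exact: measurable_fun_pair1.
Qed.

Lemma prob_indep_pair (c : R * R -> bool) : measurable_fun setT c ->
  P [set w | c (Y w, Z w)] = \int[P]_v P [set w | c (Y w, Z v)].
Proof.
move=> mc.
have mcz z : measurable_fun setT (fun w => c (Y w, z)).
  by apply: (measurableT_comp mc); exact: measurable_fun_pair.
have mg : measurable_fun setT (fun p => (if c p then 1 else 0 : R)%:E).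
  by apply/measurable_EFinP; exact: measurable_fun_ifT.
rewrite -integral_bool_indic; last first.
  by apply: measurable_bool_set; apply: (measurableT_comp mc); exact: measurable_fun_pair.
rewrite (integral_indep_pair mg); last by move=> p; case: ifP.
by apply: eq_integral => v _; rewrite integral_bool_indic //; exact: measurable_bool_set.
Qed.

Lemma integral_indep_mul (f h : R -> R) :
  measurable_fun setT f -> measurable_fun setT h ->
  (forall x, 0 <= f x)%R -> (forall x, 0 <= h x)%R ->
  \int[P]_w (f (Y w) * h (Z w))%:E =
  \int[P]_w (f (Y w))%:E * \int[P]_w (h (Z w))%:E.
Proof.
move=> mf mh f0 h0.
have mg : measurable_fun setT (fun p : R * R => (f p.1 * h p.2)%:E).
  by apply/measurable_EFinP; apply: measurable_funM; exact: measurableT_comp.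
rewrite (integral_indep_pair mg); last by move=> p; rewrite lee_fin mulr_ge0.
have mfY : measurable_fun setT (fun w => (f (Y w))%:E).
  by apply/measurable_EFinP; exact: measurableT_comp.
transitivity (\int[P]_v (\int[P]_w (f (Y w))%:E * (h (Z v))%:E)).
  apply: eq_integral => v _.
  under eq_integral do rewrite /= EFinM.
  by rewrite ge0_integralZr // ?lee_fin // => w _; rewrite lee_fin.
have fY0 : 0 <= \int[P]_w (f (Y w))%:E by apply: integral_ge0 => w _; rewrite lee_fin.
rewrite ge0_integralZl // => [|w _]; last by rewrite lee_fin.
exact/measurable_EFinP/measurableT_comp.
Qed.

End pair.

Lemma ge0_integral_eq_law (Y1 Y2 : {RV P >-> R}) :
  (forall S, measurable S -> P (Y1 @^-1` S) = P (Y2 @^-1` S)) ->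
  forall f : R -> \bar R, measurable_fun setT f -> (forall x, 0 <= f x) ->
  \int[P]_w f (Y1 w) = \int[P]_w f (Y2 w).
Proof.
move=> h f mf f0.
have e1 := ge0_integral_distribution Y1 mf f0.
have e2 := ge0_integral_distribution Y2 mf f0.
rewrite /comp in e1 e2; rewrite -e1 -e2.
by apply: eq_measure_integral => S mS _; exact: h.
Qed.

End independence.

Section cylinders.
Context d (T : measurableType d) (R : realType) (P : probability T R).
Variables (I : eqType) (D : I -> bool) (X : I -> {RV P >-> R}).
Hypothesis X_indep : mutually_independent D X.
Local Open Scope ereal_scope.

Definition cylinder (L : seq I) (S : I -> set R) : set T :=
  \big[setI/setT]_(i <- L) (X i @^-1` S i).

Lemma cylinderP L S x : cylinder L S x <-> forall i, i \in L -> S i (X i x).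
Proof.
rewrite /cylinder; elim: L => [|j L IH]; first by rewrite big_nil; split.
rewrite big_cons; split.
  by move=> [xj /IH h] i; rewrite inE => /orP[/eqP->//|]; exact: h.
move=> h; split; first by apply: h; rewrite inE eqxx.
by apply/IH => i iL; apply: h; rewrite inE iL orbT.
Qed.

Lemma eq_cylinder L S S' : {in L, S =1 S'} -> cylinder L S = cylinder L S'.
Proof. by move=> eS; rewrite /cylinder !big_seq; apply: eq_bigr => i /eS ->. Qed.

Lemma measurable_cylinder L S : (forall i, measurable (S i)) -> measurable (cylinder L S).
Proof. by move=> mS; apply: bigsetI_measurable => i _; exact: measurable_funPTI. Qed.

Lemma prob_cylinder L S : uniq L -> {in L, forall i, D i} ->
  (forall i, measurable (S i)) ->
  P (cylinder L S) = \big[*%E/1]_(i <- L) P (X i @^-1` S i).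
Proof.
move=> uL DL mS; rewrite -X_indep //; congr (P _).
by apply/seteqP; split => x /cylinderP.
Qed.

Lemma indep_X_cylinder j L S0 S : uniq (j :: L) -> {in j :: L, forall i, D i} ->
  measurable S0 -> (forall i, measurable (S i)) ->
  P (X j @^-1` S0 `&` cylinder L S) = P (X j @^-1` S0) * P (cylinder L S).
Proof.
move=> /= /andP[jL uL] DL mS0 mS.
pose S' i := if i == j then S0 else S i.
have mS' i : measurable (S' i) by rewrite /S'; case: eqP.
have S'E : {in L, S' =1 S}.
  by move=> i iL; rewrite /S' ifN //; apply: contraNneq jL => <-.
have DL' : {in L, forall i, D i} by move=> i iL; apply: DL; rewrite inE iL orbT.
have -> : X j @^-1` S0 `&` cylinder L S = cylinder (j :: L) S'.
  by rewrite /cylinder big_cons -/(cylinder L S') (eq_cylinder S'E) /S' eqxx.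
rewrite prob_cylinder //= ?jL // big_cons {1}/S' eqxx prob_cylinder //.
by congr (_ * _); apply: eq_big_seq => i /S'E ->.
Qed.

Definition cylinders (L : seq I) : set (set T) :=
  [set E | exists S, (forall i, measurable (S i)) /\ E = cylinder L S].

Lemma cylinders_measurable L : cylinders L `<=` measurable.
Proof. by move=> E [S [mS ->]]; exact: measurable_cylinder. Qed.

Lemma cylinders_setI_closed L : setI_closed (cylinders L).
Proof.
move=> E1 E2 [S1 [m1 ->]] [S2 [m2 ->]]; exists (fun i => S1 i `&` S2 i); split.
  by move=> i; exact: measurableI.
apply/seteqP; split => x.
  by move=> [/cylinderP h1 /cylinderP h2]; apply/cylinderP => i iL; split; [exact: h1|exact: h2].
by move=> /cylinderP h; split; apply/cylinderP => i /h[].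
Qed.

(* [Z] is measurable for the sigma-algebra generated by [X i], [i \in L]. *)
Definition depends_on (L : seq I) (Z : T -> R) :=
  measurable_fun (setT : set (g_sigma_algebraType (cylinders L)))
    (Z : g_sigma_algebraType (cylinders L) -> R).

Lemma depends_on_preimage L Z S : depends_on L Z -> measurable S ->
  <<s cylinders L >> (Z @^-1` S).
Proof. by move=> mZ mS; have := mZ measurableT S mS; rewrite setTI. Qed.

Lemma depends_on_measurable L Z : depends_on L Z -> measurable_fun setT Z.
Proof.
move=> mZ _ S mS; rewrite setTI; move: (depends_on_preimage mZ mS).
by apply: smallest_sub; [exact: sigma_algebra_measurable|exact: cylinders_measurable].
Qed.

Lemma depends_on_X L i : i \in L -> depends_on L (X i).
Proof.
move=> iL _ S mS; rewrite setTI; apply: sub_sigma_algebra.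
exists (fun k => if k == i then S else setT); split; first by move=> k; case: eqP.
apply/seteqP; split => x.
  by move=> Sx; apply/cylinderP => k kL; case: eqP => // ->.
by move=> /cylinderP /(_ i iL); rewrite eqxx.
Qed.

Lemma depends_on_subset L L' Z : {subset L <= L'} -> depends_on L Z -> depends_on L' Z.
Proof.
move=> sLL' mZ _ S mS; rewrite setTI; move: (depends_on_preimage mZ mS).
apply: smallest_sub; first exact: smallest_sigma_algebra.
move=> E [S' [mS' ->]]; rewrite /cylinder big_seq.
apply: (@bigsetI_measurable _ (g_sigma_algebraType (cylinders L'))) => i iL.
by have := depends_on_X (sLL' i iL) measurableT (mS' i); rewrite setTI.
Qed.

Lemma indep_X_depends_on L j Z : depends_on L Z -> uniq (j :: L) ->
  {in j :: L, forall i, D i} -> independent P (X j) Z.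
Proof.
move=> mZ uL DL S S' mS mS'.
apply: (indep_event_g_sigma (measurable_funPTI (X j) mS)
  (@cylinders_setI_closed L) (@cylinders_measurable L)); last exact: depends_on_preimage.
by move=> E [S'' [mS'' ->]]; exact: indep_X_cylinder.
Qed.

End cylinders.

Section exponential_tail.
Context (R : realType) (mu : R) (mu_gt0 : 0 < mu).
Let pdf (y : R) := (exponential_pdf mu y)%:E.
Let measurable_pdf D : measurable_fun D pdf.
Proof.
by apply/measurable_EFinP; apply: measurable_funTS; exact: measurable_exponential_pdf.
Qed.

(* [R] splits into [`]-oo, 0[] (where the density vanishes), [`[0, x]] and [`]x, +oo[]. *)
Lemma exponential_prob_gt (x : R) : 0 <= x ->
  exponential_prob mu `]x, +oo[ = (expR (- mu * x))%:E.
Proof.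
move=> x0.
pose U1 := `]-oo, 0%R[%classic : set R.
pose U2 := `[0%R, x]%classic : set R.
pose U3 := `]x, +oo[%classic : set R.
have [mU1 mU2 mU3] : [/\ measurable U1, measurable U2 & measurable U3].
  by split; exact: measurable_itv.
have U123 : [set: R] = U1 `|` (U2 `|` U3).
  apply/seteqP; split => y //= _; rewrite /U1 /U2 /U3 /= !in_itv /= andbT.
  have [y0|y0] := ltP y 0; [by left|right].
  by have [yx|yx] := leP y x; [left; apply/andP|right].
have D1 : [disjoint U1 & U2 `|` U3].
  apply/disj_setPS => y [] /=; rewrite /U1 /U2 /U3 /= !in_itv /= andbT.
  by move=> y0 [/andP[y0' _]|xy]; lra.
have D2 : [disjoint U2 & U3].
  by apply/disj_setPS => y [] /=; rewrite /U2 /U3 /= !in_itv /= andbT => /andP[_ yx] xy; lra.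
have := integral_exponential_pdf mu_gt0; rewrite -/pdf U123.
rewrite (@integral_setU _ _ _ lebesgue_measure _ _ pdf mU1 (measurableU _ _ mU2 mU3)
  (@measurable_pdf _) D1).
rewrite (@integral_setU _ _ _ lebesgue_measure _ _ pdf mU2 mU3 (@measurable_pdf _) D2).
rewrite integral0_eq ?add0e; last first.
  by move=> y; rewrite /U1 /= in_itv /= => y0; rewrite /pdf lt0_exponential_pdf.
have -> : (\int[lebesgue_measure]_(y in U2) pdf y = 1 - (expR (- mu * x))%:E)%E.
  move: x0; rewrite le_eqVlt => /orP[/eqP x0|]; last exact: exponential_prob_itv0c.
  by rewrite /U2 -x0 set_itv1 integral_set1 mulr0 expR0 subee.
rewrite /exponential_prob -/pdf.
have : (0 <= \int[lebesgue_measure]_(y in U3) pdf y)%E.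
  by apply: integral_ge0 => y _; rewrite lee_fin exponential_pdf_ge0 // ltW.
case: (\int[lebesgue_measure]_(y in U3) pdf y)%E => [r| |] // _.
by rewrite -EFinB -EFinD => -[h]; congr EFin; lra.
Qed.

Lemma exponential_prob_ge (x : R) : 0 <= x ->
  exponential_prob mu `[x, +oo[ = (expR (- mu * x))%:E.
Proof.
by move=> x0; rewrite -exponential_prob_gt // /exponential_prob -integral_itv_obnd_cbnd.
Qed.

End exponential_tail.

Definition expN_pos (R : realType) (mu y : R) : R := if 0 < y then expR (- mu * y) else 0.

Section expN.
Context (R : realType) (mu : R).

Lemma measurable_expN : measurable_fun setT (fun y : R => expR (- mu * y)).
Proof. by apply: measurableT_comp => //; exact: measurable_funM. Qed.

Lemma measurable_expN_pos : measurable_fun setT (expN_pos mu).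
Proof. by apply: measurable_fun_ifT => //; [exact: measurable_fun_ltr|exact: measurable_expN]. Qed.

Lemma expN_pos_ge0 y : 0 <= expN_pos mu y.
Proof. by rewrite /expN_pos; case: ifP => // _; exact: expR_ge0. Qed.

End expN.

Section exponential_competition.
Context d (T : measurableType d) (R : realType) (P : probability T R).
Variables (mu : R) (Y Z : T -> R).
Hypotheses (mu_gt0 : 0 < mu) (mY : measurable_fun setT Y) (mZ : measurable_fun setT Z).
Hypothesis YZ_indep : independent P Y Z.
Hypothesis Y_exp : forall S, measurable S -> P (Y @^-1` S) = exponential_prob mu S.

Let P_set0 (c : T -> bool) : (forall w, c w = false) -> P [set w | c w] = 0%E.
Proof.
by move=> c0; rewrite (_ : [set w | c w] = set0) ?measure0 // -subset0 => w /=; rewrite c0.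
Qed.

(* Memorylessness, integrated over an independent [Z]. *)
Lemma prob_shift_lt_exponential s : 0 <= s ->
  P [set w | (0 <= Z w) && (s + Z w < Y w)] =
  (\int[P]_w (if 0 <= Z w then expR (- mu * (s + Z w)) else 0)%:E)%E.
Proof.
move=> s0; pose c (p : R * R) := (0 <= p.2) && (s + p.2 < p.1).
have mc : measurable_fun setT c.
  apply: measurable_and; first exact: measurable_fun_ler.
  by apply: measurable_fun_ltr => //; exact: measurable_funD.
apply: eq_trans (prob_indep_pair mY mZ YZ_indep mc) _.
apply: eq_integral => v _; rewrite /c /=.
have [z0|z0] := boolP (0 <= Z v); last by rewrite P_set0 // => w; rewrite (negbTE z0).
rewrite (_ : [set w | _] = Y @^-1` `]s + Z v, +oo[); last first.
  by apply/seteqP; split => w /=; rewrite in_itv /= andbT.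
by rewrite Y_exp // exponential_prob_gt // addr_ge0.
Qed.

Lemma prob_gt0_le_exponential :
  P [set w | (0 < Z w) && (Z w <= Y w)] = (\int[P]_w (expN_pos mu (Z w))%:E)%E.
Proof.
pose c (p : R * R) := (0 < p.2) && (p.2 <= p.1).
have mc : measurable_fun setT c.
  by apply: measurable_and; [exact: measurable_fun_ltr|exact: measurable_fun_ler].
apply: eq_trans (prob_indep_pair mY mZ YZ_indep mc) _.
apply: eq_integral => v _; rewrite /c /expN_pos /=.
have [z0|z0] := boolP (0 < Z v); last by rewrite P_set0 // => w; rewrite (negbTE z0).
rewrite (_ : [set w | _] = Y @^-1` `[Z v, +oo[); last first.
  by apply/seteqP; split => w /=; rewrite in_itv /= andbT.
by rewrite Y_exp // exponential_prob_ge // ltW.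
Qed.

Lemma prob_gt0_le_exponential_tail (p : R) :
  (forall s, 0 <= s -> P [set w | s < Z w] = (p * expR (- mu * s))%:E) ->
  P [set w | (0 < Z w) && (Z w <= Y w)] =
  (\int[P]_w (if 0 < Y w then p * (1 - expR (- mu * Y w)) else 0)%:E)%E.
Proof.
move=> Z_tail; pose c (q : R * R) := (0 < q.1) && (q.1 <= q.2).
have mc : measurable_fun setT c.
  by apply: measurable_and; [exact: measurable_fun_ltr|exact: measurable_fun_ler].
apply: eq_trans (prob_indep_pair mZ mY (independentC YZ_indep) mc) _.
apply: eq_integral => v _; rewrite /c /=.
have [y0|y0] := boolP (0 < Y v); last first.
  rewrite P_set0 // => w; apply/negbTE; apply: contra y0 => /andP[z0 zy].
  exact: lt_le_trans z0 zy.
have mZgt y : measurable [set w | y < Z w].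
  by apply: measurable_bool_set; exact: measurable_fun_ltr.
rewrite (_ : [set w | _] = [set w | 0 < Z w] `\` [set w | Y v < Z w]); last first.
  apply/seteqP; split => w /=; first by move=> /andP[-> zy]; split => //; rewrite ltNge zy.
  by move=> [-> /negP]; rewrite -leNgt.
rewrite probability_setD_sub //; last by move=> w /=; exact: lt_trans.
rewrite (Z_tail 0) // (Z_tail (Y v)) ?ltW // mulr0 expR0 mulr1 -EFinB.
by congr EFin; ring.
Qed.

(* Both lemmas above compute [P (0 < Z <= Y)]. *)
Lemma expN_pos_tail_balance (p : R) : 0 <= p ->
  (forall s, 0 <= s -> P [set w | s < Z w] = (p * expR (- mu * s))%:E) ->
  (\int[P]_w (expN_pos mu (Z w))%:E + p%:E * \int[P]_w (expN_pos mu (Y w))%:E = p%:E)%E.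
Proof.
move=> p0 Z_tail.
have mF : measurable_fun setT (fun y : R => if 0 < y then p * (1 - expR (- mu * y)) else 0).
  apply: measurable_fun_ifT => //; first exact: measurable_fun_ltr.
  by apply: measurable_funM => //; apply: measurable_funB => //; exact: measurable_expN.
have mexpN_posY : measurable_fun setT (fun w => (expN_pos mu (Y w))%:E).
  by apply/measurable_EFinP; exact: measurableT_comp (measurable_expN_pos _) mY.
have FE (y : R) : (if 0 < y then p * (1 - expR (- mu * y)) else 0) + p * expN_pos mu y =
            p * (if 0 < y then 1 else 0).
  by rewrite /expN_pos; case: ifP => _; ring.
rewrite -prob_gt0_le_exponential (prob_gt0_le_exponential_tail Z_tail).
rewrite -ge0_integralZl_EFin // => [|w _]; last by rewrite lee_fin expN_pos_ge0.
rewrite -ge0_integralD //; last 4 first.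
- move=> w _; case: ifPn => // y0; rewrite lee_fin mulr_ge0 // subr_ge0 expR_le1.
  by rewrite mulNr oppr_le0 mulr_ge0 // ltW.
- by apply/measurable_EFinP; exact: measurableT_comp mF mY.
- by move=> w _; rewrite -EFinM lee_fin mulr_ge0 // expN_pos_ge0.
- by apply: emeasurable_funM => //; exact: measurable_cst.
under eq_integral do rewrite -EFinM -EFinD FE EFinM.
have mYgt : measurable [set w | 0 < Y w].
  by apply: measurable_bool_set; exact: measurable_fun_ltr.
rewrite ge0_integralZl_EFin //; last 2 first.
- by move=> w _; case: ifP.
- by apply/measurable_EFinP; apply: measurable_fun_ifT => //; exact: measurable_fun_ltr.
rewrite integral_bool_indic // (_ : [set w | 0 < Y w] = Y @^-1` `]0, +oo[); last first.
  by apply/seteqP; split => w /=; rewrite in_itv /= andbT.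
by rewrite Y_exp // exponential_prob_gt // mulr0 expR0 mule1.
Qed.

End exponential_competition.

Section cycle_events.
Context (R : realType) (T : Type) (A B : nat -> T -> R).
Local Notation Ws := (Wshift A B).

(* [Wrun k x] is [W_{k+2}] as long as [W_2, ..., W_{k+2}] are all positive,
   and [0] once the cycle has ended. *)
Fixpoint Wrun (k : nat) : T -> R :=
  match k with
  | 0 => fun x => maxr 0 (B 2 x - A 1 x)
  | k'.+1 => fun x =>
      if 0 < Wrun k' x then maxr 0 (B k'.+3 x - A k'.+2 x - Wrun k' x) else 0
  end.

Lemma Wshift_ge0 x i : 0 <= Ws x i.
Proof. by case: i => [|i] //=; rewrite le_max lexx. Qed.

Lemma Wshift_gt0 x i : (0 < Ws x i) = (Ws x i != 0).
Proof. by rewrite lt0r Wshift_ge0 andbT. Qed.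

Lemma Wrun_gt0E k x : 0 < Wrun k x ->
  Wrun k x = Ws x k.+1 /\ forall i, (0 < i <= k.+1)%N -> Ws x i != 0.
Proof.
elim: k => [|k IH] /=.
  rewrite subr0 => h; split => // i /andP[i1 i2].
  have -> : i = 1%N by apply/eqP; rewrite eqn_leq i1 i2.
  by rewrite /= subr0 gt_eqF.
case: ifPn => [q0 h|_]; last by rewrite ltxx.
have [e1 e2] := IH q0; rewrite e1 in h *; split => // i /andP[i1].
rewrite leq_eqVlt => /orP[/eqP->|]; first by rewrite -Wshift_gt0.
by rewrite ltnS => i2; apply: e2; rewrite i1 i2.
Qed.

Lemma Wrun_gt0P k x : 0 < Wrun k x <-> forall i, (0 < i <= k.+1)%N -> Ws x i != 0.
Proof.
split; first by case/Wrun_gt0E.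
elim: k => [|k IH] h /=; first by have := h 1%N isT; rewrite -Wshift_gt0 /= subr0.
have q0 : 0 < Wrun k x by apply: IH => i /andP[i1 i2]; apply: h; rewrite i1 leqW.
rewrite q0; have [-> _] := Wrun_gt0E q0.
by have := h k.+2; rewrite ltnS leqnn -Wshift_gt0 => /(_ isT).
Qed.

(* The level [B_{k+3}] has to exceed for the cycle to go on; [-1] flags an ended cycle. *)
Definition Wrun_load (k : nat) (x : T) : R :=
  if 0 < Wrun k x then A k.+2 x + Wrun k x else -1.

Let lt_max0 (s v : R) : 0 <= s -> (s < maxr 0 v) = (s < v).
Proof. by move=> s0; rewrite lt_max ltNge s0. Qed.

Lemma Wrun0_gt s : 0 <= s -> (forall x, 0 <= A 1 x) ->
  [set x | s < Wrun 0 x] = [set x | (0 <= A 1 x) && (s + A 1 x < B 2 x)].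
Proof. by move=> s0 A0; apply/seteqP; split => x /=; rewrite lt_max0 // A0 => h; lra. Qed.

Lemma WrunS_gt k s : 0 <= s -> (forall x, 0 <= A k.+2 x) ->
  [set x | s < Wrun k.+1 x] =
  [set x | (0 <= Wrun_load k x) && (s + Wrun_load k x < B k.+3 x)].
Proof.
move=> s0 A0; apply/seteqP; split => x /=; rewrite /Wrun_load; case: ifPn => W0 //=.
- by rewrite lt_max0 // addr_ge0 ?A0 ?ltW //= => h; lra.
- by move=> h; lra.
- by rewrite lt_max0 // => /andP[_ h]; lra.
- by move=> /andP[h _]; lra.
Qed.

Lemma Wrun_gt0S m : [set x | 0 < Wrun m.+1 x] `<=` [set x | 0 < Wrun m x].
Proof. by move=> x /=; case: ifP => // _; rewrite ltxx. Qed.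

Lemma cycle_len_eqE n : cycle_len_eq A B n =
  [set x | Ws x n = 0 /\ forall k, (0 < k < n)%N -> Ws x k <> 0].
Proof. by []. Qed.

Lemma cycle_len_eq1 : cycle_len_eq A B 1 = ~` [set x | 0 < Wrun 0 x].
Proof.
rewrite cycle_len_eqE; apply/seteqP; split => x /=; rewrite subr0.
  by move=> [-> _]; rewrite ltxx.
move=> W1; split => [|k]; last by move=> /andP[k1 k2]; lia.
have := Wshift_ge0 x 1; rewrite /= subr0 => W1ge.
by apply/eqP; rewrite eq_le W1ge andbT leNgt; apply/negP.
Qed.

Lemma cycle_len_eqSS m :
  cycle_len_eq A B m.+2 = [set x | 0 < Wrun m x] `\` [set x | 0 < Wrun m.+1 x].
Proof.
rewrite cycle_len_eqE; apply/seteqP; split => x.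
  move=> [W0 Wneq0]; split.
    by apply/Wrun_gt0P => i /andP[i0 im]; apply/eqP; apply: Wneq0; rewrite i0.
  by case/Wrun_gt0E => _ /(_ m.+2); rewrite ltnSn W0 eqxx => /(_ isT).
move=> [/Wrun_gt0P on off]; split.
  apply/eqP; apply/negPn/negP => Wm; apply: off; apply/Wrun_gt0P => i /andP[i0].
  by rewrite leq_eqVlt ltnS => /orP[/eqP->//|im]; apply: on; rewrite i0.
by move=> k /andP[k0 km]; apply/eqP; apply: on; rewrite k0 -ltnS.
Qed.

End cycle_events.

Definition AB_indices (k : nat) : seq (nat + nat) :=
  map inl (iota 1 k.+1) ++ map inr (iota 2 k.+1).

Lemma inl_AB_indices k i : (inl i \in AB_indices k) = (0 < i <= k.+1)%N.
Proof.
rewrite mem_cat mem_map ?mem_iota; last by move=> ? ? [].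
by rewrite orbC; case: mapP => [[] //|_] /=; rewrite add1n ltnS.
Qed.

Lemma inr_AB_indices k i : (inr i \in AB_indices k) = (1 < i <= k.+2)%N.
Proof.
rewrite mem_cat [inr i \in map inr _]mem_map ?mem_iota; last by move=> ? ? [].
by case: mapP => [[] //|_] /=; rewrite addSn add1n ltnS.
Qed.

Lemma uniq_AB_indices k : uniq (AB_indices k).
Proof.
have inl_inj : injective (@inl nat nat) by move=> ? ? [].
have inr_inj : injective (@inr nat nat) by move=> ? ? [].
rewrite cat_uniq (map_inj_uniq inl_inj) (map_inj_uniq inr_inj) !iota_uniq andbT andTb.
by apply/hasPn => _ /mapP[y _ ->]; apply/mapP => -[].
Qed.

Lemma AB_indices_idx_gt0 k : {in AB_indices k, forall i, (0 < idx i)%N}.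
Proof.
by case=> i; rewrite ?inl_AB_indices ?inr_AB_indices /= => /andP[? ?]; lia.
Qed.

Lemma AB_indices_subS k : {subset AB_indices k <= AB_indices k.+1}.
Proof.
case=> i; rewrite ?inl_AB_indices ?inr_AB_indices => /andP[-> /leqW] //.
Qed.

Section cycle_law.
Context d (T : measurableType d) (R : realType) (P : probability T R).
Variables (A B : nat -> {RV P >-> R}) (mu : R).
Hypothesis mu_gt0 : 0 < mu.
Hypothesis A_ge0 : forall n x, (1 <= n)%N -> 0 <= A n x.
Hypothesis A_id : forall n, (1 <= n)%N -> forall S : set R, measurable S ->
  distribution P (A n) S = distribution P (A 1%N) S.
Hypothesis B_exp : forall n, (1 <= n)%N -> forall S : set R, measurable S ->
  distribution P (B n) S = exponential_prob mu S.
Hypothesis AB_indep : mutually_independent (fun i => (1 <= idx i)%N) (AB_family A B).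

Local Notation X := (AB_family A B).
Local Notation Wr := (Wrun (fun k => A k : T -> R) (fun k => B k : T -> R)).
Let alpha := LST P (A 1%N) mu.

Let indep_X j L Z : depends_on X L Z -> j \notin L -> uniq L ->
  (0 < idx j)%N -> {in L, forall i, (0 < idx i)%N} -> independent P (X j) Z.
Proof.
move=> mZ jL uL j0 L0; apply: (indep_X_depends_on AB_indep mZ); first by rewrite /= jL.
by move=> i; rewrite inE => /predU1P[->|/L0].
Qed.

Lemma depends_on_Wrun k : depends_on X (AB_indices k) (Wr k).
Proof.
elim: k => [|k IH] /=.
  apply: measurable_maxr => //; apply: measurable_funB.
    by apply: (@depends_on_X _ _ _ _ _ X _ (inr 2)); rewrite inr_AB_indices.
  by apply: (@depends_on_X _ _ _ _ _ X _ (inl 1)); rewrite inl_AB_indices.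
have IH' := depends_on_subset (@AB_indices_subS k) IH.
have mB : depends_on X (AB_indices k.+1) (B k.+3).
  by apply: (@depends_on_X _ _ _ _ _ X _ (inr k.+3)); rewrite inr_AB_indices ltnS leqnn.
have mA : depends_on X (AB_indices k.+1) (A k.+2).
  by apply: (@depends_on_X _ _ _ _ _ X _ (inl k.+2)); rewrite inl_AB_indices leqnn.
apply: measurable_fun_ifT; first exact: measurable_fun_ltr.
  by apply: measurable_maxr => //; do 2 apply: measurable_funB => //.
exact: measurable_cst.
Qed.

Let measurable_Wrun k : measurable_fun setT (Wr k).
Proof. exact: depends_on_measurable (@depends_on_Wrun k). Qed.

Lemma integral_expN_A n : (1 <= n)%N ->
  (\int[P]_w (expR (- mu * A n w))%:E)%E = alpha%:E.
Proof.
move=> n1; have mexpN := measurable_expN mu.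
have mf : measurable_fun setT (fun y : R => (expR (- mu * y))%:E).
  exact/measurable_EFinP.
rewrite (@ge0_integral_eq_law _ _ _ P (A n) (A 1%N) _ _ mf); first last.
- by move=> y; rewrite lee_fin expR_ge0.
- by move=> S mS; exact: A_id.
rewrite /alpha /LST unlock fineK // ge0_fin_numE; last first.
  by apply: integral_ge0 => w _; rewrite lee_fin expR_ge0.
apply: (@le_lt_trans _ _ (\int[P]_w (cst 1%E w))%E); last first.
  by rewrite integral_cst // mul1e (le_lt_trans (probability_le1 P measurableT)) ?ltey.
apply: ge0_le_integral => //.
- exact/measurable_EFinP/(measurableT_comp mexpN).
- by move=> w _; rewrite /= lee_fin expR_le1 mulNr oppr_le0 mulr_ge0 ?A_ge0 // ltW.
Qed.

Lemma alpha_ge0 : 0 <= alpha.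
Proof.
rewrite -lee_fin -(integral_expN_A (leqnn 1)).
by apply: integral_ge0 => w _; rewrite lee_fin expR_ge0.
Qed.

Lemma prob_B_gt n s : (1 <= n)%N -> 0 <= s ->
  P [set w | s < B n w] = (1 * expR (- mu * s))%:E.
Proof.
move=> n1 s0; rewrite mul1r (_ : [set w | s < B n w] = B n @^-1` `]s, +oo[); last first.
  by apply/seteqP; split => w /=; rewrite in_itv /= andbT.
by have := B_exp n1 (measurable_itv `]s, +oo[); rewrite /distribution /pushforward => ->;
  rewrite exponential_prob_gt.
Qed.

Lemma integral_expN_pos_B n : (1 <= n)%N ->
  (\int[P]_w (expN_pos mu (B n w))%:E)%E = (2^-1)%:E.
Proof.
move=> n1; have mexpN_pos := measurable_expN_pos mu.
have BnSn : (\int[P]_w (expN_pos mu (B n.+1 w))%:E = \int[P]_w (expN_pos mu (B n w))%:E)%E.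
  apply: (@ge0_integral_eq_law _ _ _ P _ _ _ (fun y => (expN_pos mu y)%:E)).
  - move=> S mS; have := B_exp n1 mS; have := B_exp (ltn0Sn n) mS.
    by rewrite /distribution /pushforward => -> ->.
  - exact/measurable_EFinP.
  - by move=> y; rewrite lee_fin expN_pos_ge0.
have BnSn_indep : independent P (B n.+1) (B n).
  apply: (@indep_X (inr n.+1) [:: inr n] (B n) (depends_on_X (mem_head _ _))) => //.
    by rewrite inE; apply/eqP; case=> /esym /n_Sn.
  by move=> i; rewrite inE => /eqP ->.
have := expN_pos_tail_balance mu_gt0 (measurable_funPT (B n.+1)) (measurable_funPT (B n))
  BnSn_indep (B_exp (ltn0Sn n)) ler01 (fun s => @prob_B_gt n s n1).
rewrite BnSn mul1e.
have : (0 <= \int[P]_w (expN_pos mu (B n w))%:E)%E.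
  by apply: integral_ge0 => w _; rewrite lee_fin expN_pos_ge0.
case: (\int[P]_w _)%E => [c| |] // _.
by rewrite -EFinD => -[c2]; congr EFin; lra.
Qed.

Lemma prob_Wrun0_gt s : 0 <= s -> P [set w | s < Wr 0 w] = (alpha * expR (- mu * s))%:E.
Proof.
move=> s0; rewrite Wrun0_gt // => [|w]; last exact: A_ge0.
have B2A1_indep : independent P (B 2) (A 1%N).
  apply: (@indep_X (inr 2) [:: inl 1%N] (A 1%N) (depends_on_X (mem_head _ _))) => //.
  by move=> i; rewrite inE => /eqP ->.
rewrite (prob_shift_lt_exponential mu_gt0 (measurable_funPT (B 2)) (measurable_funPT (A 1%N))
  B2A1_indep (B_exp (isT : 1 <= 2)%N) s0).
transitivity (\int[P]_w ((expR (- mu * s))%:E * (expR (- mu * A 1%N w))%:E))%E.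
  apply: eq_integral => w _; rewrite A_ge0 // -EFinM -expRD.
  by congr (EFin (expR _)); ring.
have f0 w : [set: T] w -> (0 <= (expR (- mu * A 1%N w))%:E)%E.
  by rewrite lee_fin expR_ge0.
have mf : measurable_fun setT (fun w => (expR (- mu * A 1%N w))%:E).
  exact/measurable_EFinP/(measurableT_comp (measurable_expN mu)).
by rewrite (ge0_integralZl_EFin P measurableT f0 mf (expR_ge0 _)) integral_expN_A // -EFinM mulrC.
Qed.

Lemma depends_on_Wrun_load k : depends_on X (inl k.+2 :: AB_indices k)
  (Wrun_load (fun k => A k : T -> R) (fun k => B k : T -> R) k).
Proof.
have sub : {subset AB_indices k <= inl k.+2 :: AB_indices k}.
  by move=> i iL; rewrite inE iL orbT.
have depW := depends_on_subset sub (@depends_on_Wrun k).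
have depA := @depends_on_X _ _ _ _ _ X _ _ (mem_head (inl k.+2) (AB_indices k)).
apply: measurable_fun_ifT => //; first exact: measurable_fun_ltr.
exact: measurable_funD.
Qed.

Lemma prob_WrunS_gt k s : 0 <= s ->
  P [set w | s < Wr k.+1 w] =
  ((alpha * expR (- mu * s))%:E * \int[P]_w (expN_pos mu (Wr k w))%:E)%E.
Proof.
move=> s0; rewrite WrunS_gt // => [|w]; last exact: A_ge0.
have Ak_notin : inl k.+2 \notin AB_indices k by rewrite inl_AB_indices ltnn andbF.
have BZ_indep : independent P (B k.+3)
    (Wrun_load (fun k => A k : T -> R) (fun k => B k : T -> R) k).
  apply: (@indep_X (inr k.+3) _ _ (@depends_on_Wrun_load k)) => //.
  - by rewrite inE /= inr_AB_indices ltnn andbF.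
  - by rewrite cons_uniq Ak_notin uniq_AB_indices.
  - by move=> i; rewrite inE => /predU1P[->//|/AB_indices_idx_gt0].
have AW_indep : independent P (A k.+2) (Wr k).
  apply: (@indep_X (inl k.+2) _ (Wr k) (@depends_on_Wrun k)) => //.
    exact: uniq_AB_indices.
  exact: AB_indices_idx_gt0.
rewrite (prob_shift_lt_exponential mu_gt0 (measurable_funPT (B k.+3))
  (depends_on_measurable (@depends_on_Wrun_load k)) BZ_indep (B_exp (isT : 1 <= k.+3)%N) s0).
transitivity (\int[P]_w ((expR (- mu * s))%:E *
                         (expR (- mu * A k.+2 w) * expN_pos mu (Wr k w))%:E))%E.
  apply: eq_integral => w _; rewrite /Wrun_load /expN_pos.
  case: ltP => W0; last by rewrite ler0N1 mulr0 mule0.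
  rewrite addr_ge0 ?A_ge0 ?ltW // -EFinM -!expRD.
  by congr (EFin (expR _)); ring.
have f0 w : [set: T] w -> (0 <= (expR (- mu * A k.+2 w) * expN_pos mu (Wr k w))%:E)%E.
  by rewrite lee_fin mulr_ge0 ?expR_ge0 ?expN_pos_ge0.
have mf : measurable_fun setT
    (fun w => (expR (- mu * A k.+2 w) * expN_pos mu (Wr k w))%:E).
  apply/measurable_EFinP; apply: measurable_funM.
    exact: measurableT_comp (measurable_expN mu) (measurable_funPT (A k.+2)).
  exact: measurableT_comp (measurable_expN_pos mu) (measurable_Wrun k).
rewrite (ge0_integralZl_EFin P measurableT f0 mf (expR_ge0 _)).
rewrite (integral_indep_mul (measurable_funPT (A k.+2)) (measurable_Wrun k) AW_indep
  (measurable_expN mu) (measurable_expN_pos mu) (fun y => expR_ge0 _) (@expN_pos_ge0 _ mu)).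
by rewrite integral_expN_A // muleA -EFinM mulrC.
Qed.

Lemma integral_expN_pos_Wrun k (p : R) : 0 <= p ->
  (forall s, 0 <= s -> P [set w | s < Wr k w] = (p * expR (- mu * s))%:E) ->
  (\int[P]_w (expN_pos mu (Wr k w))%:E)%E = (p / 2)%:E.
Proof.
move=> p0 Wtail.
have BW_indep : independent P (B k.+3) (Wr k).
  apply: (@indep_X (inr k.+3) _ (Wr k) (@depends_on_Wrun k)) => //.
  - by rewrite inr_AB_indices ltnn andbF.
  - exact: uniq_AB_indices.
  - exact: AB_indices_idx_gt0.
have := expN_pos_tail_balance mu_gt0 (measurable_funPT (B k.+3)) (measurable_Wrun k)
  BW_indep (B_exp (isT : 1 <= k.+3)%N) p0 Wtail.
rewrite integral_expN_pos_B // -EFinM.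
have : (0 <= \int[P]_w (expN_pos mu (Wr k w))%:E)%E.
  by apply: integral_ge0 => w _; rewrite lee_fin expN_pos_ge0.
case: (\int[P]_w _)%E => [c| |] // _.
by rewrite -EFinD => -[cp]; congr EFin; lra.
Qed.

Lemma prob_Wrun_gt k s : 0 <= s ->
  P [set w | s < Wr k w] = (alpha * (alpha / 2) ^+ k * expR (- mu * s))%:E.
Proof.
elim: k s => [|k IH] s s0; first by rewrite expr0 mulr1 prob_Wrun0_gt.
have p0 : 0 <= alpha * (alpha / 2) ^+ k.
  by rewrite mulr_ge0 ?exprn_ge0 ?divr_ge0 ?alpha_ge0.
rewrite prob_WrunS_gt // (integral_expN_pos_Wrun p0 IH) -EFinM exprS.
by congr EFin; ring.
Qed.

Lemma prob_Wrun_gt0 k : P [set w | 0 < Wr k w] = (alpha * (alpha / 2) ^+ k)%:E.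
Proof. by rewrite prob_Wrun_gt // mulr0 expR0 mulr1. Qed.

Lemma measurable_Wrun_gt0 k : measurable [set w | 0 < Wr k w].
Proof. by apply: measurable_bool_set; exact: measurable_fun_ltr. Qed.

End cycle_law.

Theorem theorem3p3 (d : measure_display) (T : measurableType d) (R : realType)
  (P : probability T R) (A B : nat -> {RV P >-> R}) (mu : R)
  (mu_gt0 : 0 < mu)
  (A_ge0 : forall n x, (1 <= n)%N -> 0 <= A n x)
  (A_id : forall n, (1 <= n)%N -> forall S : set R, measurable S ->
     distribution P (A n) S = distribution P (A 1%N) S)
  (B_exp : forall n, (1 <= n)%N -> forall S : set R, measurable S ->
     distribution P (B n) S = exponential_prob mu S)
  (indep : mutually_independent (fun i => (1 <= idx i)%N) (AB_family A B)) :
  forall n : nat, (1 <= n)%N ->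
    P (cycle_len_eq (fun k => A k : T -> R) (fun k => B k : T -> R) n) =
    (if n == 1%N then 1 - LST P (A 1%N) mu
     else (1 - LST P (A 1%N) mu / 2) * (LST P (A 1%N) mu / 2) ^+ (n - 2)
          * LST P (A 1%N) mu)%:E.
Proof.
have tail := prob_Wrun_gt0 mu_gt0 A_ge0 A_id B_exp indep.
have mW := @measurable_Wrun_gt0 _ _ _ P A B.
case=> [//|[|m] _].
  by rewrite cycle_len_eq1 probability_setC // tail expr0 mulr1.
rewrite cycle_len_eqSS probability_setD_sub //; last exact: Wrun_gt0S.
by rewrite !tail -EFinB /= subSS subSS subn0 exprS; congr EFin; ring.
Qed.
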